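(* The independence polynomial $Ind(G;x)$ and the clique polynomial $Cl(G;x)$ are both weakly distinguishing; i.e. almost all graphs $G$ have an $Ind$-mate and almost all graphs $G$ have a $Cl$-mate.
   Context: All graphs are finite and simple. For a graph $G$ and $i\ge 1$, let $c_i(G)$ be the number of vertex subsets $A\subseteq V(G)$ with $G[A]$ isomorphic to the complete graph $K_i$, and $s_i(G)$ the number of $A\subseteq V(G)$ with $G[A]$ edgeless on $i$ vertices. Then $Cl(G;x)=1+\sum_{i\ge1} c_i(G)x^i$ and $Ind(G;x)=1+\sum_{i\ge 1}s_i(G)x^i$. For a graph polynomial $P$ (an isomorphism-invariant map from graphs to polynomials), $H$ is a $P$-mate of $G$ if $P(G)=P(H)$ and $H\not\cong G$; $G$ is $P$-unique if it has no $P$-mate. Let $\mathcal{G}(n)$ be the set of isomorphism classes of graphs on $n$ vertices and $U_P(n)$ the set of $P$-unique graphs in $\mathcal{G}(n)$. $P$ is weakly distinguishing if $\lim_{n\to\infty}|U_P(n)|/|\mathcal{G}(n)|=0$. *)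

From HB Require Import structures.
From mathcomp Require Import all_boot all_order all_algebra.
From mathcomp Require Import all_classical all_reals all_analysis.

Set Implicit Arguments.
Unset Strict Implicit.
Unset Printing Implicit Defensive.

Import Order.TTheory GRing.Theory Num.Theory numFieldNormedType.Exports.
Local Open Scope ring_scope.

Definition graph (n : nat) := {ffun 'I_n * 'I_n -> bool}.

Definition simple_graph (n : nat) (g : graph n) : bool :=
  [forall i : 'I_n, ~~ g (i, i)] &&
  [forall i : 'I_n, forall j : 'I_n, g (i, j) == g (j, i)].

Definition iso (n m : nat) (g : graph n) (h : graph m) : Prop :=
  exists f : 'I_n -> 'I_m, bijective f /\ forall i j : 'I_n, g (i, j) = h (f i, f j).

Definition clique_count (n : nat) (g : graph n) (i : nat) : nat :=
  #|[set A : {set 'I_n} | (#|A| == i) &&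
      [forall x in A, forall y in A, (x != y) ==> g (x, y)]]|.

Definition indep_count (n : nat) (g : graph n) (i : nat) : nat :=
  #|[set A : {set 'I_n} | (#|A| == i) &&
      [forall x in A, forall y in A, ~~ g (x, y)]]|.

(* For i > n the counts vanish, so summing up to n is the full sum over i >= 1. *)
Definition Cl (n : nat) (g : graph n) : {poly int} :=
  1 + \sum_(1 <= i < n.+1) 'X^i *+ clique_count g i.

Definition Ind (n : nat) (g : graph n) : {poly int} :=
  1 + \sum_(1 <= i < n.+1) 'X^i *+ indep_count g i.

Definition graph_poly := forall n : nat, graph n -> {poly int}.

Definition mate (P : graph_poly) (n m : nat) (g : graph n) (h : graph m) : Prop :=
  simple_graph h /\ P n g = P m h /\ ~ iso g h.

Definition P_unique (P : graph_poly) (n : nat) (g : graph n) : Prop :=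
  forall (m : nat) (h : graph m), ~ mate P g h.

Definition iso_class (n : nat) (g : graph n) : {set graph n} :=
  [set h : graph n | simple_graph h && `[< iso g h >]].

Definition graph_classes (n : nat) : {set {set graph n}} :=
  (@iso_class n) @: [set g : graph n | simple_graph g].

Definition unique_classes (P : graph_poly) (n : nat) : {set {set graph n}} :=
  [set C in graph_classes n | `[< exists g, g \in C /\ P_unique P g >]].

Local Open Scope classical_set_scope.
Definition weakly_distinguishing (R : realType) (P : graph_poly) : Prop :=
  (fun n : nat => (#|unique_classes P n|%:R / #|graph_classes n|%:R : R))
    @ \oo --> 0.

From mathcomp Require Import all_classical all_reals all_analysis unstable.
From mathcomp Require Import all_boot all_order all_algebra perm zify.

(* Both polynomials count the vertex subsets with a hereditary property that
   fixes the adjacency of every pair inside the subset (edgeless, resp.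
   complete).  Take k = n/4.  A graph with no such k-subset has a polynomial
   determined by its first k coefficients, each at most 2^n, so at most
   (2^n+1)^k isomorphism classes of such graphs are unique.  A graph with such
   a k-subset has about k^2/2 of its adjacencies prescribed, so there are at
   most 2^n 2^(N - k^2/2) of them, N = n(n-1)/2.  Both numbers are o(2^N/n!),
   while there are at least 2^N/n! isomorphism classes. *)

Set Implicit Arguments.
Unset Strict Implicit.
Unset Printing Implicit Defensive.

Import Order.TTheory GRing.Theory Num.Theory numFieldNormedType.Exports.

Lemma card_imset_factor (T U V : finType) (A : {set T}) (f : T -> U) (h : T -> V) :
  {in A &, forall x y, f x = f y -> h x = h y} -> #|h @: A| <= #|f @: A|.
Proof.
move=> fh; set S := [set (f x, h x) | x in A].
have -> : h @: A = snd @: S by rewrite -imset_comp.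
have -> : f @: A = fst @: S by rewrite -imset_comp.
rewrite [X in _ <= X]card_in_imset ?leq_imset_card //.
by move=> _ _ /imsetP [x xA ->] /imsetP [y yA ->] /= fxy; rewrite fxy (fh x y).
Qed.

Lemma exists_subset_card (T : finType) (A : {set T}) k :
  k <= #|A| -> exists2 B : {set T}, B \subset A & #|B| = k.
Proof.
case/card_geqP => s [s_uniq s_size sA]; exists [set x in s].
  by apply/subsetP => x; rewrite inE => /sA.
by rewrite cardsE -s_size; apply/card_uniqP.
Qed.

Lemma iso_refl n (g : graph n) : iso g g.
Proof. by exists id; split=> //; exists id. Qed.

Lemma iso_sym n m (g : graph n) (h : graph m) : iso g h -> iso h g.
Proof.
case=> f [[f' fK f'K] gh]; exists f'; split; first by exists f.
by move=> i j; rewrite gh !f'K.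
Qed.

Lemma iso_trans n m p (g : graph n) (h : graph m) (l : graph p) :
  iso g h -> iso h l -> iso g l.
Proof.
case=> f [f_bij gh] [f2 [f2_bij hl]]; exists (f2 \o f).
by split; [exact: bij_comp | move=> i j; rewrite gh hl].
Qed.

Lemma iso_class_eq n (g h : graph n) : iso g h -> iso_class g = iso_class h.
Proof.
move=> gh; apply/setP=> l; rewrite !inE; case: (simple_graph l) => //=.
apply/asboolP/asboolP => [gl|hl]; first exact: iso_trans (iso_sym gh) gl.
exact: iso_trans gh hl.
Qed.

Lemma mem_graph_classes n (C : {set graph n}) (g : graph n) :
  C \in graph_classes n -> g \in C -> simple_graph g /\ C = iso_class g.
Proof.
case/imsetP=> g0 _ -> ; rewrite inE => /andP [g_simple /asboolP g0g].
by split=> //; apply: iso_class_eq.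
Qed.

Lemma P_unique_iso (P : graph_poly) n m (g : graph n) (h : graph m) :
  P_unique P g -> simple_graph h -> P n g = P m h -> iso g h.
Proof.
move=> g_unique h_simple gh; have [//|not_iso] := pselect (iso g h).
by case: (g_unique m h).
Qed.

Definition relabel n (g : graph n) (s : {perm 'I_n}) : graph n :=
  [ffun p => g (s p.1, s p.2)].

Lemma card_iso_class n (g : graph n) : #|iso_class g| <= n`!.
Proof.
have : iso_class g \subset [set relabel g s | s : {perm 'I_n}].
  apply/subsetP=> h; rewrite inE => /andP [_ /asboolP [f [[f' fK f'K] gh]]].
  apply/imsetP; exists (perm (can_inj f'K)) => //.
  by apply/ffunP=> [[i j]]; rewrite ffunE /= !permE gh !f'K.
move/subset_leq_card/leq_trans; apply.
by apply: leq_trans (leq_imset_card _ _) _; rewrite card_Sn.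
Qed.

Lemma card_simple_graphs_classes n :
  #|[set g : graph n | simple_graph g]| <= n`! * #|graph_classes n|.
Proof.
have : [set g : graph n | simple_graph g] \subset
       \bigcup_(C in graph_classes n) C.
  apply/subsetP=> g; rewrite inE => g_simple; apply/bigcupP.
  exists (iso_class g); first by apply/imsetP; exists g; rewrite ?inE.
  by rewrite inE g_simple; apply/asboolP; apply: iso_refl.
move/subset_leq_card/leq_trans; apply.
apply: leq_trans (card_big_setU _ _ _) _.
rewrite mulnC -sum_nat_const; apply: leq_sum => _ /imsetP [g _ ->].
exact: card_iso_class.
Qed.

Definition upper_pairs n (A : {set 'I_n}) : {set 'I_n * 'I_n} :=
  [set p : 'I_n * 'I_n | [&& p.1 < p.2, p.1 \in A & p.2 \in A]].

Lemma upper_pairsS n (A B : {set 'I_n}) :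
  A \subset B -> upper_pairs A \subset upper_pairs B.
Proof.
by move/subsetP=> AB; apply/subsetP=> p; rewrite !inE => /and3P [-> /AB -> /AB ->].
Qed.

Lemma card_upper_pairs n (A : {set 'I_n}) :
  #|A| * #|A| <= 2 * #|upper_pairs A| + #|A|.
Proof.
have : setX A A \subset (upper_pairs A :|: [set (p.2, p.1) | p in upper_pairs A])
                       :|: [set (x, x) | x in A].
  apply/subsetP=> [[i j]]; rewrite !inE /= => /andP [iA jA].
  have [ij|ji|/val_inj ->] := ltngtP i j.
  - by rewrite iA jA.
  - apply/orP; left; apply/orP; right; apply/imsetP; exists (j, i) => //.
    by rewrite !inE ji iA jA.
  - by apply/orP; right; apply/imsetP; exists j.
rewrite -cardsX => /subset_leq_card/leq_trans; apply.
apply: leq_trans (leq_card_setU _ _) _; apply: leq_add; last exact: leq_imset_card.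
apply: leq_trans (leq_card_setU _ _) _.
by rewrite mul2n -addnn leq_add // leq_imset_card.
Qed.

Lemma simple_graph_eq n (g1 g2 : graph n) :
  simple_graph g1 -> simple_graph g2 ->
  {in upper_pairs [set: 'I_n], g1 =1 g2} -> g1 = g2.
Proof.
case/andP=> /forallP g1_irr /forallP g1_sym.
case/andP=> /forallP g2_irr /forallP g2_sym g12; apply/ffunP=> [[i j]].
have [ij|ji|/val_inj ->] := ltngtP i j.
- by apply: g12; rewrite !inE ij.
- rewrite (eqP (forallP (g1_sym i) j)) (eqP (forallP (g2_sym i) j)).
  by apply: g12; rewrite !inE ji.
- by rewrite (negbTE (g1_irr j)) (negbTE (g2_irr j)).
Qed.

Definition graph_of_edges n (E : {set 'I_n * 'I_n}) : graph n :=
  [ffun p => (p \in E) || ((p.2, p.1) \in E)].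

Lemma card_simple_graphs n :
  2 ^ #|upper_pairs [set: 'I_n]| <= #|[set g : graph n | simple_graph g]|.
Proof.
set U := upper_pairs [set: 'I_n].
have edgesE (E : {set 'I_n * 'I_n}) p :
    E \subset U -> p \in U -> graph_of_edges E p = (p \in E).
  case: p => i j /subsetP EU; rewrite ffunE /= !inE /= !andbT => ij.
  case: ((j, i) \in E) / boolP => [/EU|]; last by rewrite orbF.
  by rewrite !inE /= !andbT => ji; have := ltn_trans ij ji; rewrite ltnn.
have edges_simple (E : {set 'I_n * 'I_n}) :
    E \subset U -> simple_graph (graph_of_edges E).
  move/subsetP=> EU; apply/andP; split; apply/forallP=> i.
    by rewrite ffunE /= orbb; apply/negP => /EU; rewrite !inE ltnn.
  by apply/forallP=> j; rewrite !ffunE /= orbC.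
rewrite -card_powerset -(@card_in_imset _ _ (@graph_of_edges n)); last first.
  move=> E1 E2; rewrite !powersetE => E1U E2U E12; apply/setP=> p.
  case pU: (p \in U); first by rewrite -(edgesE _ _ E1U pU) -(edgesE _ _ E2U pU) E12.
  by apply/idP/idP => [/(subsetP E1U)|/(subsetP E2U)]; rewrite pU.
apply/subset_leq_card/subsetP=> _ /imsetP [E EU ->].
by rewrite inE edges_simple // -powersetE.
Qed.

Lemma leq_expn2r m1 m2 e : m1 <= m2 -> m1 ^ e <= m2 ^ e.
Proof. by case: e => // e; rewrite leq_exp2r. Qed.

Lemma exp2_ge_linear t : 10 <= t -> 64 * t.+1 <= 2 ^ t.
Proof.
elim: t => // t IH; rewrite leq_eqVlt => /orP [/eqP <-|] //.
by rewrite ltnS => /IH; rewrite expnS; lia.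
Qed.

Lemma fact_le_exp2 n : n`! <= 2 ^ (n * (trunc_log 2 n).+1).
Proof.
have fact_le_expn m : m`! <= m ^ m.
  elim: m => // m IH; rewrite factS expnS leq_mul // (leq_trans IH) //.
  exact: leq_expn2r.
apply: leq_trans (fact_le_expn n) _; rewrite mulnC expnM.
by rewrite leq_expn2r // ltnW // trunc_log_ltn.
Qed.

Lemma trunc_log2_small n : 1024 <= n -> 64 * (trunc_log 2 n).+1 <= n.
Proof.
move=> n_ge; have log_le := @trunc_logP 2 n erefl (leq_trans _ n_ge).
have [t_ge|t_lt] := leqP 10 (trunc_log 2 n); last lia.
exact: leq_trans (exp2_ge_linear t_ge) (log_le _).
Qed.

(* With n.+1 * n`! <= 2^(n + n e) and (2^n + 1)^k <= 2^((n+1) k), these say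
   that each of the two terms bounded in classes_arith is below 2^(N-1). *)
Lemma classes_exponents n N k e : 1024 <= n -> n * n <= 2 * N + n ->
  4 * k <= n <= 4 * k + 3 -> 64 * e <= n ->
  n + n * e + n.+1 * k < N /\ n + n * e + (n + (N - (k * k - k) %/ 2)) < N.
Proof.
move=> n_ge nN /andP [k_hi k_lo] e_small.
have kk : n * n <= 16 * (k * k) + 6 * n + 9 by have := leq_mul k_lo k_lo; lia.
have en : 64 * (n * e) <= n * n by rewrite mulnCA leq_mul2l e_small orbT.
have nk : 4 * (n * k) <= n * n by rewrite mulnCA leq_mul.
have nn : 1024 * n <= n * n by rewrite leq_mul2r n_ge orbT.
clear e_small.
by split; lia.
Qed.

Lemma classes_arith n N k : 1024 <= n -> n * n <= 2 * N + n ->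
  4 * k <= n <= 4 * k + 3 ->
  n.+1 * (n`! * ((2 ^ n).+1 ^ k + 2 ^ n * 2 ^ (N - (k * k - k) %/ 2))) <= 2 ^ N.
Proof.
move=> n_ge nN nk; set e := (trunc_log 2 n).+1.
have n1_fact : n.+1 * n`! <= 2 ^ (n + n * e).
  by rewrite expnD; apply: leq_mul; [exact: ltn_expl | exact: fact_le_exp2].
have pow_k : (2 ^ n).+1 ^ k <= 2 ^ (n.+1 * k).
  by rewrite expnM leq_expn2r // expnS mul2n -addnn -addn1 leq_add2l expn_gt0.
rewrite mulnA; apply: leq_trans (leq_mul n1_fact (leq_add pow_k (leqnn _))) _.
rewrite mulnDr -!expnD -(leq_pmul2l (isT : 0 < 2)) mulnDr [in X in _ <= X]mul2n -addnn.
have [first_exp second_exp] := classes_exponents n_ge nN nk (trunc_log2_small n_ge).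
by rewrite -!expnS leq_add // leq_pexp2l.
Qed.

Section SubsetPolynomial.
Local Open Scope ring_scope.

Variable ok : forall n, graph n -> {set 'I_n} -> bool.
Variable b : bool.
Hypothesis ok_sub : forall n (g : graph n) (A B : {set 'I_n}),
  B \subset A -> ok g A -> ok g B.
Hypothesis ok_pairs : forall n (g : graph n) (A : {set 'I_n}) p,
  ok g A -> p \in upper_pairs A -> g p = b.

Definition subset_count n (g : graph n) i :=
  #|[set A : {set 'I_n} | (#|A| == i) && ok g A]|.

Definition subset_poly : graph_poly :=
  fun n g => 1 + \sum_(1 <= i < n.+1) 'X^i *+ subset_count g i.

Definition ok_free n k (g : graph n) :=
  ~~ [exists A : {set 'I_n}, (#|A| == k) && ok g A].

Lemma subset_count_free n k (g : graph n) i :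
  ok_free k g -> (k <= i)%N -> subset_count g i = 0%N.
Proof.
move=> /existsPn g_free ki; apply/eqP; rewrite cards_eq0; apply/eqP/setP => A.
rewrite !inE; apply/negbTE/andP => -[/eqP A_card A_ok].
have [|B BA B_card] := @exists_subset_card _ A k; first by rewrite A_card.
by have := g_free B; rewrite B_card eqxx (ok_sub BA A_ok).
Qed.

Lemma subset_count_le n (g : graph n) i : (subset_count g i <= 2 ^ n)%N.
Proof.
apply: leq_trans (max_card _) _.
by rewrite -cardsT -powersetT card_powerset cardsT card_ord.
Qed.

Definition count_vector n k (g : graph n) : {ffun 'I_k -> 'I_(2 ^ n).+1} :=
  [ffun i : 'I_k => inord (subset_count g i)].

Lemma subset_poly_count_vector n k (g1 g2 : graph n) :
  ok_free k g1 -> ok_free k g2 -> count_vector k g1 = count_vector k g2 ->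
  subset_poly g1 = subset_poly g2.
Proof.
move=> g1_free g2_free g12.
suff count_eq i : subset_count g1 i = subset_count g2 i.
  by rewrite /subset_poly; congr (_ + _); apply: eq_bigr => i _; rewrite count_eq.
have [ik|ki] := ltnP i k; last by rewrite !(subset_count_free _ ki).
move/ffunP/(_ (Ordinal ik))/(congr1 val): g12.
by rewrite !ffunE /= !inordK // ltnS subset_count_le.
Qed.

(* Such a graph is determined by its adjacencies outside the pairs of A,
   those inside being b. *)
Lemma card_simple_ok n (A : {set 'I_n}) :
  (#|[set g : graph n | simple_graph g && ok g A]|
     <= 2 ^ (#|upper_pairs [set: 'I_n]| - #|upper_pairs A|))%N.
Proof.
set D := upper_pairs [set: 'I_n] :\: upper_pairs A.
have <- : #|D| = (#|upper_pairs [set: 'I_n]| - #|upper_pairs A|)%N.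
  rewrite -(cardsID (upper_pairs A) (upper_pairs [set: 'I_n])).
  by rewrite (setIidPr (upper_pairsS (subsetT A))) addKn.
rewrite -card_powerset.
have restrict_inj : {in [set g : graph n | simple_graph g && ok g A] &,
                      injective (fun g : graph n => D :&: [set p | g p])}.
  move=> g1 g2; rewrite !inE => /andP [g1_simple g1_ok] /andP [g2_simple g2_ok] g12.
  apply: simple_graph_eq => // p pU.
  case pA: (p \in upper_pairs A); first by rewrite !(ok_pairs _ pA).
  have pD : p \in D by rewrite in_setD pA pU.
  by move/setP/(_ p): g12; rewrite !in_setI pD /= !inE.
rewrite -(card_in_imset restrict_inj); apply/subset_leq_card/subsetP.
by move=> _ /imsetP [g _ ->]; rewrite powersetE subsetIl.
Qed.

Lemma card_simple_not_free n k :
  (#|[set g : graph n | simple_graph g && ~~ ok_free k g]|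
     <= 2 ^ n * 2 ^ (#|upper_pairs [set: 'I_n]| - (k * k - k) %/ 2))%N.
Proof.
set N := #|upper_pairs [set: 'I_n]|.
have : [set g : graph n | simple_graph g && ~~ ok_free k g] \subset
       \bigcup_(A : {set 'I_n} | #|A| == k) [set g | simple_graph g && ok g A].
  apply/subsetP=> g; rewrite inE negbK => /andP [g_simple].
  case/existsP=> A /andP [A_card A_ok].
  by apply/bigcupP; exists A => //; rewrite inE g_simple A_ok.
move/subset_leq_card/leq_trans; apply; apply: leq_trans (card_big_setU _ _ _) _.
apply: (@leq_trans (\sum_(A : {set 'I_n}) 2 ^ (N - (k * k - k) %/ 2))).
  rewrite [X in (_ <= X)%N](bigID (fun A : {set 'I_n} => #|A| == k)) /=.
  apply: leq_trans (leq_addr _ _); apply: leq_sum => A /eqP A_card.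
  apply: leq_trans (card_simple_ok A) _; rewrite leq_exp2l //.
  by have := card_upper_pairs A; rewrite A_card; lia.
by rewrite sum_nat_const -cardsT -powersetT card_powerset cardsT card_ord.
Qed.

Lemma card_unique_classes n k :
  (#|unique_classes subset_poly n|
     <= (2 ^ n).+1 ^ k + 2 ^ n * 2 ^ (#|upper_pairs [set: 'I_n]| - (k * k - k) %/ 2))%N.
Proof.
set Free := [set g : graph n |
  [&& simple_graph g, ok_free k g & `[< P_unique subset_poly g >]]].
set Dense := [set g : graph n | simple_graph g && ~~ ok_free k g].
have : unique_classes subset_poly n \subset
       (@iso_class n @: Free) :|: (@iso_class n @: Dense).
  apply/subsetP => C; rewrite inE => /andP [C_class /asboolP [g [gC g_unique]]].
  have [g_simple ->] := mem_graph_classes C_class gC.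
  rewrite in_setU; case g_free: (ok_free k g); apply/orP; [left|right].
    by apply: imset_f; rewrite inE g_simple g_free; apply/asboolP.
  by apply: imset_f; rewrite inE g_simple g_free.
move/subset_leq_card/leq_trans; apply; apply: leq_trans (leq_card_setU _ _) _.
apply: leq_add; last exact: leq_trans (leq_imset_card _ _) (card_simple_not_free n k).
apply: leq_trans (card_imset_factor (f := @count_vector n k) _) _.
  move=> g1 g2; rewrite !inE => /and3P [_ g1_free /asboolP g1_unique].
  move=> /and3P [g2_simple g2_free _] g12.
  apply/iso_class_eq/(P_unique_iso g1_unique) => //.
  exact: subset_poly_count_vector g12.
by apply: leq_trans (max_card _) _; rewrite card_ffun !card_ord.
Qed.

Lemma card_unique_classes_small n : (1024 <= n)%N ->
  (n.+1 * #|unique_classes subset_poly n| <= #|graph_classes n|)%N.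
Proof.
move=> n_ge; have n_div4 : (4 * (n %/ 4) <= n <= 4 * (n %/ 4) + 3)%N by lia.
have N_ge := card_upper_pairs [set: 'I_n]; rewrite cardsT card_ord in N_ge.
rewrite -(@leq_pmul2l n`!) ?fact_gt0 //.
apply: leq_trans (card_simple_graphs_classes n); apply: leq_trans (card_simple_graphs n).
apply: leq_trans (classes_arith n_ge N_ge n_div4).
by rewrite mulnCA leq_mul2l leq_mul2l card_unique_classes !orbT.
Qed.

Lemma weakly_distinguishing_subset_poly (R : realType) :
  weakly_distinguishing R subset_poly.
Proof.
apply: (@squeeze_cvgr _ _ _ _ (fun=> 0) (@harmonic R)); last first.
- exact: cvg_harmonic.
- exact: cvg_cst.
near=> n; have n_ge : (1024 <= n)%N by near: n; exists 1024%N.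
apply/andP; split; first by rewrite divr_ge0.
have [->|classes_gt0] := posnP #|graph_classes n|.
  by rewrite invr0 mulr0 harmonic_ge0.
rewrite /harmonic /= ler_pdivrMr ?ltr0n // mulrC ler_pdivlMr ?ltr0n //.
by rewrite -natrM ler_nat mulnC card_unique_classes_small.
Unshelve. all: by end_near.
Qed.

End SubsetPolynomial.

Definition independent n (g : graph n) (A : {set 'I_n}) :=
  [forall x in A, forall y in A, ~~ g (x, y)].

Definition clique n (g : graph n) (A : {set 'I_n}) :=
  [forall x in A, forall y in A, (x != y) ==> g (x, y)].

Lemma independentS n (g : graph n) (A B : {set 'I_n}) :
  B \subset A -> independent g A -> independent g B.
Proof.
move=> /subsetP BA /forall_inP A_indep; apply/forall_inP => x /BA /A_indep.
by move=> /forall_inP x_indep; apply/forall_inP => y /BA /x_indep.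
Qed.

Lemma cliqueS n (g : graph n) (A B : {set 'I_n}) :
  B \subset A -> clique g A -> clique g B.
Proof.
move=> /subsetP BA /forall_inP A_clique; apply/forall_inP => x /BA /A_clique.
by move=> /forall_inP x_clique; apply/forall_inP => y /BA /x_clique.
Qed.

Lemma independent_upper_pairs n (g : graph n) (A : {set 'I_n}) p :
  independent g A -> p \in upper_pairs A -> g p = false.
Proof.
case: p => i j /forall_inP A_indep; rewrite inE /= => /and3P [_ /A_indep i_indep jA].
by apply/negbTE; move/forall_inP: i_indep; apply.
Qed.

Lemma clique_upper_pairs n (g : graph n) (A : {set 'I_n}) p :
  clique g A -> p \in upper_pairs A -> g p = true.
Proof.
case: p => i j /forall_inP A_clique; rewrite inE /= => /and3P [ij /A_clique i_clique jA].
move/forall_inP: i_clique => /(_ j jA) /implyP; apply.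
by apply: contraTneq ij => ->; rewrite ltnn.
Qed.

Theorem theorem2 (R : realType) :
  weakly_distinguishing R Ind /\ weakly_distinguishing R Cl.
Proof.
split.
- exact: (@weakly_distinguishing_subset_poly independent false
            independentS independent_upper_pairs).
- exact: (@weakly_distinguishing_subset_poly clique true
            cliqueS clique_upper_pairs).
Qed.
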